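(* Let $1<p<\infty$, $n\ge 1$, and let $f\in C([0,\infty))$, $g\in C^{0,1}([0,\infty))$ be strictly increasing with $f(0)=g(0)=0$. Let $0<R<\infty$ and let $v=v(r)$ be a solution on $[0,R]$ of $$\operatorname{sign}(v')\big(r^{n-1}|v'|^{p-1}\big)'=r^{n-1}\big(f(v)\pm g(|v'|)\big),\qquad v(0)=v_0>0,\quad v'(0)=0,$$ where the sign $\pm$ is fixed (either $+$ throughout or $-$ throughout). Then for all $r\in(0,R)$: $v(r)>0$, $v'(r)>0$, $v''(r)\ge0$, and $v(r)\le v_0+R\,v'(r)$.
   Context: This ODE is the equation $\Delta_p u=f(u)\pm g(|\nabla u|)$, $\Delta_p u=\operatorname{div}(|\nabla u|^{p-2}\nabla u)$, written for radial functions $u(x)=v(|x|)$. *)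

From Stdlib Require Import Reals Lra.
From Coquelicot Require Import Coquelicot.
Open Scope R_scope.

(* phi_p(s) = |s|^(p-2) s = sign(s) |s|^(p-1), with phi_p(0) = 0. *)
Definition phi_p (p s : R) : R :=
  if Rlt_dec 0 s then Rpower s (p - 1)
  else if Rlt_dec s 0 then - Rpower (- s) (p - 1)
  else 0.

Definition cont_within (D : R -> Prop) (h : R -> R) (x : R) : Prop :=
  filterlim h (within D (locally x)) (locally (h x)).

Definition nonneg_half (x : R) : Prop := 0 <= x.

Definition continuous_on_halfline (h : R -> R) : Prop :=
  forall x, 0 <= x -> cont_within nonneg_half h x.

Definition strict_incr_halfline (h : R -> R) : Prop :=
  forall x y, 0 <= x -> x < y -> h x < h y.

(* g in C^{0,1}([0,oo)) : (locally) Lipschitz on [0,oo), i.e. Lipschitz on each [0,M] *)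
Definition loc_lipschitz_halfline (h : R -> R) : Prop :=
  forall M, 0 <= M -> exists L, 0 <= L /\
    forall x y, 0 <= x <= M -> 0 <= y <= M -> Rabs (h x - h y) <= L * Rabs (x - y).

(* v is a (C^1([0,R])) radial solution on [0,R] of
     (r^{n-1} |v'|^{p-2} v')' = r^{n-1} (f(v) + s g(|v'|)),  s = +1 or -1,
   with v(0) = v0, v'(0) = 0; dv is the derivative of v. *)
Definition is_radial_solution (p : R) (n : nat) (f g : R -> R) (s Rr v0 : R)
  (v dv : R -> R) : Prop :=
  (forall r, 0 <= r <= Rr -> cont_within (fun x => 0 <= x <= Rr) v r) /\
  (forall r, 0 <= r <= Rr -> cont_within (fun x => 0 <= x <= Rr) dv r) /\
  (forall r, 0 < r < Rr -> is_derive v r (dv r)) /\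
  (forall r, 0 < r < Rr ->
     is_derive (fun x => x ^ (n - 1) * phi_p p (dv x)) r
               (r ^ (n - 1) * (f (v r) + s * g (Rabs (dv r))))) /\
  v 0 = v0 /\ dv 0 = 0.

From Stdlib Require Import Reals Lra Lia Classical.
From Coquelicot Require Import Coquelicot.
Open Scope R_scope.

(* With m = n - 1, the flux w = r^m phi_p(v') ([flux]) satisfies w' = r^m h, where
   h = f(v) + s g(|v'|) ([rhs]), and y = phi_p(v') ([phi_dv]) satisfies y' = h - m y / r
   ([dphi_dv]).  Near 0, h is close to f(v0) > 0, so w, hence v', is positive; at a first zero
   r1 of v' we would have h(r1) = f(v(r1)) > 0, so w would increase up to w(r1) = 0 although
   w > 0 before r1.  Comparing w with the flux of a constant right-hand side C >= h gives
   y(r) <= r C / n, hence y'(r) >= h(r) - m/n sup h.  For s = 1, h increases as long as y does,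
   so y' >= h(r)/n > 0 propagates; for s = -1, between the last point a where y' >= 0 and a
   point b where y' < 0, v increases and v' decreases, so y'(b) >= y'(a) >= 0.  Then
   v'' = ((phi_p)^-1)'(y) y' >= 0, and the mean value theorem gives v(r) <= v0 + r v'(r). *)

(** * Suprema and real induction *)

Lemma locally_Rabs (x : R) (P : R -> Prop) :
  locally x P -> exists e, 0 < e /\ forall t, Rabs (t - x) < e -> P t.
Proof. intros [e He]. exists e. split; [apply cond_pos | exact He]. Qed.

Lemma is_lub_approx (E : R -> Prop) (c u : R) :
  is_lub E c -> u < c -> exists t, E t /\ u < t.
Proof.
  intros [_ Hleast] Hu. apply NNPP. intro Hno.
  enough (c <= u) by lra.
  apply Hleast. intros t Et. apply Rnot_lt_le. intro Hut. apply Hno. exists t; auto.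
Qed.

Lemma interval_induction (P : R -> Prop) (a b : R) :
  (forall r, a <= r < b -> (forall u, a < u <= r -> P u) ->
     exists e, 0 < e /\ forall u, r < u < r + e -> P u) ->
  (forall r, a < r < b -> (forall u, a < u < r -> P u) -> P r) ->
  forall r, a < r < b -> P r.
Proof.
  intros Hstep Hlimit r Hr.
  set (T := fun t => a <= t <= r /\ forall u, a < u <= t -> P u).
  destruct (completeness T) as [c Hc].
  { exists r. intros t [Ht _]. lra. }
  { exists a. split; [lra | intros u Hu; lra]. }
  assert (Hac : a <= c) by (apply Hc; split; [lra | intros u Hu; lra]).
  assert (Hcr : c <= r) by (apply Hc; intros t [Ht _]; lra).
  assert (Hupto : forall u, a < u <= c -> P u).
  { assert (Hbelow : forall u, a < u < c -> P u).
    { intros u Hu. destruct (is_lub_approx T c u Hc ltac:(lra)) as [t [[_ Ht] Hut]].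
      apply Ht. lra. }
    intros u Hu. destruct (Req_dec u c) as [->|Huc].
    - apply Hlimit; [lra | exact Hbelow].
    - apply Hbelow; lra. }
  destruct (Req_dec c r) as [<-|Hcr']; [apply Hupto; lra|].
  destruct (Hstep c ltac:(lra) Hupto) as [e [He HPe]].
  assert (Hc'1 := Rmin_l r (c + e / 2)). assert (Hc'2 := Rmin_r r (c + e / 2)).
  set (c' := Rmin r (c + e / 2)) in *.
  assert (Hcc' : c < c') by (apply Rmin_glb_lt; lra).
  enough (c' <= c) by lra.
  apply Hc. split; [lra|]. intros u Hu.
  destruct (Rle_lt_dec u c); [apply Hupto | apply HPe]; lra.
Qed.

Lemma last_nonneg_before (K : R -> R) (a b : R) :
  a < b -> 0 <= K a -> K b < 0 -> (forall x, a <= x <= b -> continuous K x) ->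
  exists c, a <= c < b /\ 0 <= K c /\ forall u, c < u <= b -> K u < 0.
Proof.
  intros Hab HKa HKb HK.
  set (T := fun t => a <= t <= b /\ 0 <= K t).
  destruct (completeness T) as [c Hc].
  { exists b. intros t [Ht _]. lra. }
  { exists a. split; [lra | exact HKa]. }
  assert (Hac : a <= c) by (apply Hc; split; [lra | exact HKa]).
  assert (Hcb : c <= b) by (apply Hc; intros t [Ht _]; lra).
  assert (HKc : 0 <= K c).
  { apply Rnot_lt_le. intro Hneg.
    destruct (locally_Rabs _ _ (HK c ltac:(lra) _ (open_lt 0 _ Hneg))) as [e [He Hnear]].
    destruct (Req_dec a c) as [<-|Hac']; [lra|].
    destruct (is_lub_approx T c (Rmax a (c - e)) Hc) as [t [[Ht HKt] Hct]].
    { apply Rmax_lub_lt; lra. }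
    assert (t <= c) by (apply Hc; split; assumption).
    assert (K t < 0); [|lra].
    apply Hnear. assert (Hm := Rmax_r a (c - e)). rewrite Rabs_left1; lra. }
  assert (Hright : forall u, c < u <= b -> K u < 0).
  { intros u Hu. apply Rnot_le_lt. intro HKu.
    assert (u <= c) by (apply Hc; split; [lra | exact HKu]). lra. }
  exists c. repeat split; try lra; auto.
  destruct (Req_dec c b) as [->|]; lra.
Qed.

Lemma nonneg_of_pos_left (h : R -> R) (a r : R) :
  a < r -> continuous h r -> (forall u, a < u < r -> 0 < h u) -> 0 <= h r.
Proof.
  intros Har Hc Hpos. apply Rnot_lt_le. intro Hneg.
  destruct (locally_Rabs _ _ (Hc _ (open_lt 0 _ Hneg))) as [e [He Hnear]].
  assert (Hu1 := Rmax_l (r - e / 2) ((a + r) / 2)).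
  assert (Hu2 := Rmax_r (r - e / 2) ((a + r) / 2)).
  set (u := Rmax (r - e / 2) ((a + r) / 2)) in *.
  assert (Hur : u < r) by (apply Rmax_lub_lt; lra).
  assert (0 < h u) by (apply Hpos; lra).
  assert (h u < 0); [|lra].
  apply Hnear. rewrite Rabs_left; lra.
Qed.

(** * Continuity relative to a set and the mean value theorem *)

Lemma continuous_cont_within (D : R -> Prop) (h : R -> R) (x : R) :
  continuous h x -> cont_within D h x.
Proof. exact (filterlim_filter_le_1 h (filter_le_within D)). Qed.

Lemma is_derive_cont_within (D : R -> Prop) (h : R -> R) (x l : R) :
  is_derive h x l -> cont_within D h x.
Proof.
  intro H. apply continuous_cont_within, (ex_derive_continuous (V := R_NormedModule)).
  exists l. exact H.
Qed.

Lemma cont_within_subset (D D' : R -> Prop) (h : R -> R) (x : R) :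
  (forall t, D' t -> D t) -> cont_within D h x -> cont_within D' h x.
Proof.
  intros HD H P HP. specialize (H P HP). unfold filtermap, within in *.
  apply (filter_imp (fun t => D t -> P (h t))); [|exact H].
  intros t Ht Dt. apply Ht, HD, Dt.
Qed.

Lemma cont_within_interior (D : R -> Prop) (h : R -> R) (a b x : R) :
  a < x < b -> (forall t, a < t < b -> D t) -> cont_within D h x -> continuous h x.
Proof.
  intros Hx HD H P HP. specialize (H P HP). unfold filtermap, within in *.
  apply (filter_imp (fun t => a < t < b /\ (D t -> P (h t)))).
  { intros t [Ht HPt]. apply HPt, HD, Ht. }
  apply filter_and; [|exact H].
  apply (locally_interval _ x a b); simpl; tauto.
Qed.

Lemma filterlim_within_of {T : Type} (F : (T -> Prop) -> Prop) {FF : Filter F}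
    (u : T -> R) (l : R) (E : R -> Prop) :
  filterlim u F (locally l) -> F (fun t => E (u t)) -> filterlim u F (within E (locally l)).
Proof.
  intros Hu HE P HP. unfold filtermap, within.
  apply (filter_imp (fun t => E (u t) /\ (E (u t) -> P (u t)))).
  { intros t [Et HPt]. exact (HPt Et). }
  apply filter_and; [exact HE | exact (Hu _ HP)].
Qed.

Lemma cont_within_comp (D : R -> Prop) (u k : R -> R) (x : R) :
  cont_within D u x -> continuous k (u x) -> cont_within D (fun t => k (u t)) x.
Proof. intros Hu Hk. exact (filterlim_comp _ _ _ u k _ _ _ Hu Hk). Qed.

Lemma cont_within_plus (D : R -> Prop) (h1 h2 : R -> R) (x : R) :
  cont_within D h1 x -> cont_within D h2 x -> cont_within D (fun t => h1 t + h2 t) x.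
Proof.
  intros H1 H2. exact (filterlim_comp_2 h1 h2 Rplus H1 H2 (filterlim_plus (h1 x) (h2 x))).
Qed.

Lemma cont_within_minus (D : R -> Prop) (h1 h2 : R -> R) (x : R) :
  cont_within D h1 x -> cont_within D h2 x -> cont_within D (fun t => h1 t - h2 t) x.
Proof.
  intros H1 H2. apply (cont_within_plus D h1 (fun t => - h2 t)); [exact H1|].
  exact (cont_within_comp D h2 Ropp x H2 (filterlim_opp (h2 x))).
Qed.

Lemma cont_within_mult (D : R -> Prop) (h1 h2 : R -> R) (x : R) :
  cont_within D h1 x -> cont_within D h2 x -> cont_within D (fun t => h1 t * h2 t) x.
Proof.
  intros H1 H2. exact (filterlim_comp_2 h1 h2 Rmult H1 H2 (filterlim_mult (h1 x) (h2 x))).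
Qed.

Definition clamp (a b x : R) : R := Rmax a (Rmin b x).

Lemma clamp_in (a b x : R) : a <= b -> a <= clamp a b x <= b.
Proof. intro Hab. unfold clamp. split; [apply Rmax_l | apply Rmax_lub; [lra | apply Rmin_l]]. Qed.

Lemma clamp_id (a b x : R) : a <= x <= b -> clamp a b x = x.
Proof. intro Hx. unfold clamp. rewrite Rmin_right, Rmax_right; lra. Qed.

Lemma clamp_lipschitz (a b x y : R) : a <= b -> Rabs (clamp a b x - clamp a b y) <= Rabs (x - y).
Proof.
  intro Hab. unfold clamp, Rmax, Rmin.
  repeat destruct Rle_dec; unfold Rabs; repeat destruct Rcase_abs; lra.
Qed.

Lemma clamp_continuous (F : R -> R) (a b x : R) : a <= x <= b ->
  cont_within (fun t => a <= t <= b) F x -> continuous (fun t => F (clamp a b t)) x.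
Proof.
  intros Hx HF. rewrite <- (clamp_id a b x Hx) in HF.
  apply (filterlim_comp _ _ _ (clamp a b) F (locally x)
           (within (fun t => a <= t <= b) (locally (clamp a b x)))); [|exact HF].
  apply (filterlim_within_of (locally x)); [|apply filter_forall; intro t; apply clamp_in; lra].
  apply filterlim_locally. intro e. exists e. intros t Ht.
  eapply Rle_lt_trans; [apply clamp_lipschitz; lra | exact Ht].
Qed.

(* Stretching [F] constantly outside [[a, b]] makes one-sided continuity at the endpoints
   two-sided, so that the classical mean value theorem applies. *)
Lemma mvt_closed (F dF : R -> R) (a b : R) :
  a < b -> (forall x, a < x < b -> is_derive F x (dF x)) ->
  cont_within (fun t => a <= t <= b) F a -> cont_within (fun t => a <= t <= b) F b ->
  exists c, a < c < b /\ F b - F a = dF c * (b - a).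
Proof.
  intros Hab HdF Ha Hb.
  set (G := fun x => F (clamp a b x)).
  assert (HG_cont : forall x, a <= x <= b -> continuity_pt G x).
  { intros x Hx. apply continuity_pt_filterlim, clamp_continuous; [exact Hx|].
    destruct (Req_dec x a) as [->|Hxa]; [exact Ha|].
    destruct (Req_dec x b) as [->|Hxb]; [exact Hb|].
    apply (is_derive_cont_within _ _ _ (dF x)), HdF. lra. }
  assert (HG_derive : forall x, a < x < b -> is_derive G x (dF x)).
  { intros x Hx. apply (is_derive_ext_loc F); [|apply HdF, Hx].
    apply (locally_interval _ x a b); [simpl; lra | simpl; lra |].
    intros t Hat Htb. unfold G. rewrite clamp_id; simpl in *; lra. }
  assert (HG_derivable : forall c, a < c < b -> derivable_pt G c).
  { intros c Hc. exists (dF c). apply is_derive_Reals, HG_derive, Hc. }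
  destruct (MVT G id a b HG_derivable (fun c _ => derivable_pt_id c) Hab HG_cont
      (fun c _ => derivable_continuous_pt _ _ (derivable_pt_id c))) as [c [Hc HMVT]].
  exists c. split; [exact Hc|].
  rewrite derive_pt_id in HMVT.
  rewrite (derive_pt_eq_0 G c (dF c) _ (proj1 (is_derive_Reals _ _ _) (HG_derive c Hc)))
    in HMVT.
  unfold G, id in HMVT. rewrite !clamp_id in HMVT by lra. lra.
Qed.

(** * The nonlinearity phi_p *)

Lemma phi_p_pos (p x : R) : 0 < x -> phi_p p x = Rpower x (p - 1).
Proof. intro Hx. unfold phi_p. destruct (Rlt_dec 0 x); [reflexivity | lra]. Qed.

Lemma phi_p_gt0 (p x : R) : 0 < x -> 0 < phi_p p x.
Proof. intro Hx. rewrite phi_p_pos by exact Hx. apply exp_pos. Qed.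

Lemma phi_p_nonpos (p x : R) : x <= 0 -> phi_p p x <= 0.
Proof.
  intro Hx. unfold phi_p. destruct (Rlt_dec 0 x); [lra|].
  destruct (Rlt_dec x 0); [|lra].
  assert (0 < Rpower (- x) (p - 1)) by apply exp_pos. lra.
Qed.

Lemma phi_p_0 (p : R) : phi_p p 0 = 0.
Proof. unfold phi_p. destruct (Rlt_dec 0 0); [lra|]. destruct (Rlt_dec 0 0); lra. Qed.

Lemma Rpower_phi_p (p x : R) : 1 < p -> 0 < x -> Rpower (phi_p p x) (/ (p - 1)) = x.
Proof.
  intros Hp Hx. rewrite phi_p_pos, Rpower_mult by exact Hx.
  replace ((p - 1) * / (p - 1)) with 1 by (field; lra). apply Rpower_1, Hx.
Qed.

Lemma phi_p_le_reg (p x y : R) : 1 < p -> 0 < x -> 0 < y -> phi_p p x <= phi_p p y -> x <= y.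
Proof.
  intros Hp Hx Hy Hle. apply Rnot_lt_le. intro Hyx.
  rewrite !phi_p_pos in Hle by assumption.
  assert (Rpower y (p - 1) < Rpower x (p - 1)) by (apply Rlt_Rpower_l; lra). lra.
Qed.

Lemma phi_p_continuous_0 (p : R) : 1 < p -> continuous (phi_p p) 0.
Proof.
  intro Hp. apply filterlim_locally. intros [eps He]. rewrite phi_p_0.
  exists (mkposreal _ (exp_pos (/ (p - 1) * ln eps))). intros x Hx.
  change (Rabs (x - 0) < Rpower eps (/ (p - 1))) in Hx. rewrite Rminus_0_r in Hx.
  change (Rabs (phi_p p x - 0) < eps). rewrite Rminus_0_r.
  assert (Heps : eps = Rpower (Rpower eps (/ (p - 1))) (p - 1)).
  { rewrite Rpower_mult. replace (/ (p - 1) * (p - 1)) with 1 by (field; lra).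
    symmetry. apply Rpower_1, He. }
  unfold phi_p. destruct (Rlt_dec 0 x); [|destruct (Rlt_dec x 0)].
  - rewrite Rabs_right in Hx |- * by (try apply Rle_ge, Rlt_le, exp_pos; lra).
    rewrite Heps. apply Rlt_Rpower_l; lra.
  - rewrite Rabs_Ropp, Rabs_right by (apply Rle_ge, Rlt_le, exp_pos).
    rewrite Rabs_left in Hx by exact r. rewrite Heps. apply Rlt_Rpower_l; lra.
  - rewrite Rabs_R0. exact He.
Qed.

Lemma is_derive_of_pow_mult (Y : R -> R) (m : nat) (t Z : R) :
  0 < t -> is_derive (fun x => x ^ m * Y x) t (t ^ m * Z) ->
  is_derive Y t (Z - INR m * Y t / t).
Proof.
  intros Ht HL.
  assert (Htm : t ^ m <> 0) by (apply pow_nonzero; lra).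
  assert (Hinv : is_derive (fun x => / x ^ m) t (- (INR m * 1 * t ^ Nat.pred m) / (t ^ m) ^ 2)).
  { apply (is_derive_inv (fun x => x ^ m)); [|exact Htm].
    apply (is_derive_pow (fun x => x)). exact (@is_derive_id R_AbsRing t). }
  apply (is_derive_ext_loc (fun x => (x ^ m * Y x) * / x ^ m)).
  - apply (locally_interval _ t 0 p_infty); [simpl; lra | exact I |].
    intros x Hx _. simpl in Hx. change (x ^ m * Y x * / x ^ m = Y x).
    field. apply pow_nonzero. lra.
  - replace (Z - INR m * Y t / t)
      with ((t ^ m * Z) * / t ^ m + t ^ m * Y t * (- (INR m * 1 * t ^ Nat.pred m) / (t ^ m) ^ 2)).
    + exact (is_derive_mult _ _ _ _ _ HL Hinv (fun _ _ => Rmult_comm _ _)).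
    + destruct m as [|k]; simpl; [field; lra|].
      assert (t ^ k <> 0) by (apply pow_nonzero; lra). field. split; lra.
Qed.

(** * Radial solutions *)

Lemma strict_incr_halfline_le (h : R -> R) (x y : R) :
  strict_incr_halfline h -> 0 <= x <= y -> h x <= h y.
Proof.
  intros Hh Hxy. destruct (Req_dec x y) as [->|Hne]; [lra|].
  left. apply Hh; lra.
Qed.

Lemma strict_incr_halfline_pos (h : R -> R) (x : R) :
  strict_incr_halfline h -> h 0 = 0 -> 0 < x -> 0 < h x.
Proof. intros Hh H0 Hx. rewrite <- H0. apply Hh; lra. Qed.

Lemma loc_lipschitz_continuous_abs (g : R -> R) (z : R) :
  loc_lipschitz_halfline g -> continuous (fun x => g (Rabs x)) z.
Proof.
  intro Hg. destruct (Hg (Rabs z + 1)) as [L [HL HLip]]; [pose proof (Rabs_pos z); lra|].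
  apply filterlim_locally. intros [eps He].
  assert (Hd : 0 < Rmin 1 (eps / (L + 1))).
  { apply Rmin_pos; [lra | apply Rdiv_lt_0_compat; lra]. }
  exists (mkposreal _ Hd). intros x Hx.
  change (Rabs (x - z) < Rmin 1 (eps / (L + 1))) in Hx.
  change (Rabs (g (Rabs x) - g (Rabs z)) < eps).
  assert (H1 := Rmin_l 1 (eps / (L + 1))). assert (H2 := Rmin_r 1 (eps / (L + 1))).
  assert (Habs := Rabs_triang_inv2 x z).
  assert (Hx_bound : Rabs x <= Rabs z + 1) by (pose proof (Rabs_triang_inv x z); lra).
  apply Rle_lt_trans with (L * (eps / (L + 1))).
  - eapply Rle_trans; [apply HLip; pose proof (Rabs_pos x); pose proof (Rabs_pos z); lra|].
    apply Rmult_le_compat_l; lra.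
  - replace (L * (eps / (L + 1))) with (eps - eps / (L + 1)) by (field; lra).
    assert (0 < eps / (L + 1)) by (apply Rdiv_lt_0_compat; lra). lra.
Qed.

Section RadialSolution.

Variables (p : R) (m : nat) (f g : R -> R) (s Rr v0 : R) (v dv : R -> R).

Hypothesis p_gt1 : 1 < p.
Hypothesis f_cont : continuous_on_halfline f.
Hypothesis f_incr : strict_incr_halfline f.
Hypothesis f_0 : f 0 = 0.
Hypothesis g_lip : loc_lipschitz_halfline g.
Hypothesis g_incr : strict_incr_halfline g.
Hypothesis g_0 : g 0 = 0.
Hypothesis s_sign : s = 1 \/ s = -1.
Hypothesis Rr_pos : 0 < Rr.
Hypothesis v0_pos : 0 < v0.
Hypothesis v_cont : forall r, 0 <= r <= Rr -> cont_within (fun x => 0 <= x <= Rr) v r.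
Hypothesis dv_cont : forall r, 0 <= r <= Rr -> cont_within (fun x => 0 <= x <= Rr) dv r.
Hypothesis v_derive : forall r, 0 < r < Rr -> is_derive v r (dv r).
Hypothesis flux_derive : forall r, 0 < r < Rr ->
  is_derive (fun x => x ^ m * phi_p p (dv x)) r (r ^ m * (f (v r) + s * g (Rabs (dv r)))).
Hypothesis v_0 : v 0 = v0.
Hypothesis dv_0 : dv 0 = 0.

Let D (x : R) : Prop := 0 <= x <= Rr.
Let rhs (t : R) : R := f (v t) + s * g (Rabs (dv t)).
Let flux (t : R) : R := t ^ m * phi_p p (dv t).
Let phi_dv (t : R) : R := phi_p p (dv t).
Let dphi_dv (t : R) : R := rhs t - INR m * phi_dv t / t.

Lemma D_interior (t : R) : 0 < t < Rr -> D t.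
Proof. unfold D. lra. Qed.

Lemma rhs_cont_within (x : R) : D x -> 0 < v x -> cont_within D rhs x.
Proof.
  intros Hx Hvx. apply cont_within_plus.
  - apply (filterlim_comp _ _ _ v f _ (within nonneg_half (locally (v x)))).
    + apply (filterlim_within_of (within D (locally x))); [exact (v_cont x Hx)|].
      apply (filter_imp (fun t => 0 < v t)); [intros t Ht; unfold nonneg_half; lra|].
      exact (v_cont x Hx _ (open_gt 0 _ Hvx)).
    + apply f_cont. lra.
  - apply (cont_within_comp D dv (fun z => s * g (Rabs z))); [exact (dv_cont x Hx)|].
    exact (continuous_mult (fun _ => s) (fun z => g (Rabs z)) _
             (continuous_const _ _) (loc_lipschitz_continuous_abs g _ g_lip)).
Qed.

Lemma rhs_0 : rhs 0 = f v0.
Proof. unfold rhs. rewrite v_0, dv_0, Rabs_R0, g_0. ring. Qed.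

Lemma rhs_near_0 (eps : R) : 0 < eps ->
  exists d, 0 < d <= Rr /\ forall t, 0 <= t < d -> Rabs (rhs t - f v0) < eps.
Proof.
  intro He.
  assert (Hlim := rhs_cont_within 0 ltac:(unfold D; lra) ltac:(rewrite v_0; lra)
                    _ (locally_ball (rhs 0) (mkposreal eps He))).
  destruct (locally_Rabs _ _ Hlim) as [d [Hd Hnear]].
  assert (H1 := Rmin_l d Rr). assert (H2 := Rmin_r d Rr).
  exists (Rmin d Rr). split; [split; [apply Rmin_pos|]; lra|].
  intros t Ht. rewrite <- rhs_0. apply Hnear; [rewrite Rminus_0_r, Rabs_right|unfold D]; lra.
Qed.

Lemma flux_0 : flux 0 = 0.
Proof. unfold flux. rewrite dv_0, phi_p_0. ring. Qed.

Lemma flux_cont_0 : cont_within D flux 0.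
Proof.
  apply cont_within_mult.
  - apply continuous_cont_within, (ex_derive_continuous (V := R_NormedModule)).
    auto_derive. trivial.
  - apply (cont_within_comp D dv (phi_p p)); [apply dv_cont; lra|].
    rewrite dv_0. apply phi_p_continuous_0, p_gt1.
Qed.

Lemma phi_dv_derive (t : R) : 0 < t < Rr -> is_derive phi_dv t (dphi_dv t).
Proof.
  intro Ht. exact (is_derive_of_pow_mult phi_dv m t (rhs t) (proj1 Ht) (flux_derive t Ht)).
Qed.

Lemma dv_continuous (t : R) : 0 < t < Rr -> continuous dv t.
Proof. intro Ht. apply (cont_within_interior D dv 0 Rr t Ht D_interior), dv_cont. lra. Qed.

Lemma dv_pos_near_0 : exists d, 0 < d /\ forall t, 0 < t < d -> 0 < dv t.
Proof.
  destruct (rhs_near_0 (f v0) (strict_incr_halfline_pos f v0 f_incr f_0 v0_pos))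
    as [d [Hd Hnear]].
  exists d. split; [lra|]. intros t Ht.
  destruct (mvt_closed flux (fun u => u ^ m * rhs u) 0 t) as [c [Hc Hmvt]].
  - lra.
  - intros x Hx. apply flux_derive. lra.
  - apply (cont_within_subset D); [intros u Hu; unfold D; lra | exact flux_cont_0].
  - apply (is_derive_cont_within _ _ _ (t ^ m * rhs t)), flux_derive. lra.
  - rewrite flux_0 in Hmvt.
    assert (Hrhs : 0 < rhs c).
    { assert (Hc' := Hnear c ltac:(lra)). apply Rabs_lt_between in Hc'. lra. }
    assert (Hflux : 0 < flux t).
    { rewrite Rminus_0_r in Hmvt. rewrite Hmvt.
      apply Rmult_lt_0_compat; [apply Rmult_lt_0_compat; [apply pow_lt|]|]; lra. }
    apply Rnot_le_lt. intro Hdv. unfold flux in Hflux.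
    assert (phi_p p (dv t) <= 0) by (apply phi_p_nonpos, Hdv).
    assert (0 < t ^ m) by (apply pow_lt; lra). nra.
Qed.

Lemma v_lt_of_dv_pos (a b : R) : 0 <= a < b -> b <= Rr ->
  (forall u, a < u < b -> 0 < dv u) -> v a < v b.
Proof.
  intros Hab HbR Hpos.
  destruct (mvt_closed v dv a b) as [c [Hc Hmvt]].
  - lra.
  - intros x Hx. apply v_derive. lra.
  - apply (cont_within_subset D); [intros u Hu; unfold D; lra | apply v_cont; lra].
  - apply (cont_within_subset D); [intros u Hu; unfold D; lra | apply v_cont; lra].
  - assert (0 < dv c) by (apply Hpos, Hc). nra.
Qed.

Lemma dv_pos (r : R) : 0 < r < Rr -> 0 < dv r.
Proof.
  apply (interval_induction (fun u => 0 < dv u) 0 Rr).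
  - intros r' Hr' Hpos. destruct (Req_dec r' 0) as [->|Hr0].
    + destruct dv_pos_near_0 as [d [Hd Hnear]].
      exists d. split; [exact Hd|]. intros u Hu. apply Hnear. lra.
    + assert (Hr'' : 0 < r' < Rr) by lra.
      destruct (locally_Rabs _ _ (dv_continuous r' Hr'' _ (open_gt 0 _ (Hpos r' ltac:(lra)))))
        as [e [He Hnear]].
      exists e. split; [exact He|]. intros u Hu. apply Hnear. rewrite Rabs_right; lra.
  - intros r' Hr' Hleft.
    destruct (nonneg_of_pos_left dv 0 r' (proj1 Hr') (dv_continuous r' Hr') Hleft)
      as [Hpos|Hzero]; [exact Hpos|exfalso].
    assert (Hv : v0 < v r').
    { rewrite <- v_0. apply v_lt_of_dv_pos; [lra | lra | exact Hleft]. }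
    assert (Hrhs : 0 < rhs r').
    { unfold rhs. rewrite <- Hzero, Rabs_R0, g_0, Rmult_0_r, Rplus_0_r.
      apply (strict_incr_halfline_pos f _ f_incr f_0). lra. }
    assert (Hcont : continuous rhs r').
    { apply (cont_within_interior D rhs 0 Rr r' Hr' D_interior), rhs_cont_within;
        [apply D_interior, Hr' | lra]. }
    destruct (locally_Rabs _ _ (Hcont _ (open_gt 0 _ Hrhs))) as [e [He Hnear]].
    assert (Hu1 := Rmax_l (r' - e / 2) (r' / 2)). assert (Hu2 := Rmax_r (r' - e / 2) (r' / 2)).
    assert (Hur : Rmax (r' - e / 2) (r' / 2) < r') by (apply Rmax_lub_lt; lra).
    set (u := Rmax (r' - e / 2) (r' / 2)) in *.
    destruct (mvt_closed flux (fun x => x ^ m * rhs x) u r') as [c [Hc Hmvt]].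
    + exact Hur.
    + intros x Hx. apply flux_derive. lra.
    + apply (is_derive_cont_within _ _ _ (u ^ m * rhs u)), flux_derive. lra.
    + apply (is_derive_cont_within _ _ _ (r' ^ m * rhs r')), flux_derive. lra.
    + assert (Hflux_r : flux r' = 0) by (unfold flux; rewrite <- Hzero, phi_p_0; ring).
      assert (Hflux_u : 0 < flux u).
      { apply Rmult_lt_0_compat; [apply pow_lt; lra | apply phi_p_gt0, Hleft; lra]. }
      assert (Hrhs_c : 0 < rhs c) by (apply Hnear; apply Rabs_lt_between; lra).
      assert (0 < c ^ m * rhs c * (r' - u)).
      { apply Rmult_lt_0_compat; [apply Rmult_lt_0_compat; [apply pow_lt|]|]; lra. }
      lra.
Qed.

Lemma v_increasing (a b : R) : 0 <= a -> a < b < Rr -> v a < v b.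
Proof. intros Ha Hab. apply v_lt_of_dv_pos; [lra | lra | intros u Hu; apply dv_pos; lra]. Qed.

Lemma v_pos (t : R) : 0 <= t < Rr -> 0 < v t.
Proof.
  intro Ht. destruct (Req_dec t 0) as [->|Ht0]; [rewrite v_0; exact v0_pos|].
  assert (Hlt : v 0 < v t) by (apply v_increasing; lra).
  rewrite v_0 in Hlt. lra.
Qed.

Lemma f_v_le (a b : R) : 0 <= a -> a < b < Rr -> f (v a) <= f (v b).
Proof.
  intros Ha Hab. apply (strict_incr_halfline_le f _ _ f_incr).
  split; [left; apply v_pos | left; apply v_increasing]; lra.
Qed.

Lemma dv_le_of_dphi_nonneg (a b : R) : 0 < a < b -> b < Rr ->
  (forall u, a < u < b -> 0 <= dphi_dv u) -> dv a <= dv b.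
Proof.
  intros Hab HbR Hnonneg.
  destruct (mvt_closed phi_dv dphi_dv a b) as [c [Hc Hmvt]].
  - lra.
  - intros x Hx. apply phi_dv_derive. lra.
  - apply (is_derive_cont_within _ _ _ (dphi_dv a)), phi_dv_derive. lra.
  - apply (is_derive_cont_within _ _ _ (dphi_dv b)), phi_dv_derive. lra.
  - apply (phi_p_le_reg p); [exact p_gt1 | apply dv_pos; lra | apply dv_pos; lra |].
    assert (0 <= dphi_dv c) by (apply Hnonneg, Hc).
    fold (phi_dv a) (phi_dv b). nra.
Qed.

(* Comparison with the flux of the constant right-hand side [C]: this is the source of
   the factor [1 / (m + 1)] that makes [dphi_dv] positive. *)
Lemma phi_dv_le (t C : R) : 0 < t < Rr -> (forall u, 0 < u < t -> rhs u <= C) ->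
  phi_dv t <= t * C / INR (S m).
Proof.
  intros Ht HC.
  assert (HN : 0 < INR (S m)) by (apply lt_0_INR; lia).
  assert (Hpoly : forall x, is_derive (fun u => u ^ S m * C / INR (S m)) x (x ^ m * C)).
  { intro x. auto_derive; [trivial|].
    change (match m with 0%nat => 1 | S _ => INR m + 1 end) with (INR (S m)). field. lra. }
  set (F := fun u => u ^ S m * C / INR (S m) - flux u).
  destruct (mvt_closed F (fun u => u ^ m * C - u ^ m * rhs u) 0 t) as [c [Hc Hmvt]].
  - lra.
  - intros x Hx. exact (is_derive_minus _ _ x _ _ (Hpoly x) (flux_derive x ltac:(lra))).
  - apply cont_within_minus.
    + apply continuous_cont_within, (ex_derive_continuous (V := R_NormedModule)).
      exists (0 ^ m * C). apply Hpoly.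
    + apply (cont_within_subset D); [intros u Hu; unfold D; lra | exact flux_cont_0].
  - apply (is_derive_cont_within _ _ _ (t ^ m * C - t ^ m * rhs t)).
    exact (is_derive_minus _ _ t _ _ (Hpoly t) (flux_derive t Ht)).
  - assert (HF0 : F 0 = 0) by (unfold F; rewrite flux_0, pow_i by lia; unfold Rdiv; ring).
    assert (HFt : 0 <= F t).
    { assert (HCc := HC c Hc). assert (0 < c ^ m) by (apply pow_lt; lra).
      assert (0 <= (c ^ m * C - c ^ m * rhs c) * (t - 0)) by (apply Rmult_le_pos; nra).
      lra. }
    unfold F, flux in HFt. change (t ^ S m) with (t * t ^ m) in HFt. fold (phi_dv t) in HFt.
    assert (Htm : 0 < t ^ m) by (apply pow_lt; lra).
    apply (Rmult_le_reg_l (t ^ m) _ _ Htm).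
    replace (t ^ m * (t * C / INR (S m))) with (t * t ^ m * C / INR (S m)) by (field; lra).
    lra.
Qed.

Lemma dphi_dv_ge (t C : R) : 0 < t < Rr -> (forall u, 0 < u < t -> rhs u <= C) ->
  rhs t - INR m * (C / INR (S m)) <= dphi_dv t.
Proof.
  intros Ht HC. assert (Hle := phi_dv_le t C Ht HC).
  assert (HN : 0 < INR (S m)) by (apply lt_0_INR; lia).
  assert (Hquot : phi_dv t / t <= C / INR (S m)).
  { apply (Rmult_le_reg_l t); [lra|].
    replace (t * (phi_dv t / t)) with (phi_dv t) by (field; lra).
    replace (t * (C / INR (S m))) with (t * C / INR (S m)) by (field; lra). exact Hle. }
  assert (INR m * phi_dv t / t <= INR m * (C / INR (S m))).
  { unfold Rdiv at 1. rewrite Rmult_assoc.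
    apply Rmult_le_compat_l; [apply pos_INR | exact Hquot]. }
  unfold dphi_dv. lra.
Qed.

Lemma dphi_dv_pos_near_0 : exists d, 0 < d /\ forall t, 0 < t < d -> 0 < dphi_dv t.
Proof.
  assert (Hf : 0 < f v0) by exact (strict_incr_halfline_pos f v0 f_incr f_0 v0_pos).
  assert (HN : 0 < INR (S m)) by (apply lt_0_INR; lia).
  set (eps := f v0 / (2 * INR (S m))).
  assert (He : 0 < eps) by (apply Rdiv_lt_0_compat; lra).
  destruct (rhs_near_0 eps He) as [d [Hd Hnear]].
  exists d. split; [lra|]. intros t Ht.
  assert (Hbound := dphi_dv_ge t (f v0 + eps) ltac:(lra)
    ltac:(intros u Hu; assert (Hu' := Hnear u ltac:(lra)); apply Rabs_lt_between in Hu'; lra)).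
  assert (Ht' := Hnear t ltac:(lra)). apply Rabs_lt_between in Ht'.
  assert (Hkey : f v0 - eps - INR m * ((f v0 + eps) / INR (S m))
                 = f v0 / (2 * INR (S m) * INR (S m))).
  { unfold eps. rewrite S_INR in *. field. lra. }
  assert (0 < f v0 / (2 * INR (S m) * INR (S m))) by (apply Rdiv_lt_0_compat; nra).
  lra.
Qed.

Lemma dphi_dv_continuous (t : R) : 0 < t < Rr -> continuous dphi_dv t.
Proof.
  intro Ht.
  assert (Hrhs : continuous rhs t).
  { apply (cont_within_interior D rhs 0 Rr t Ht D_interior), rhs_cont_within;
      [apply D_interior, Ht | apply v_pos; lra]. }
  assert (Hphi : continuous phi_dv t).
  { apply (ex_derive_continuous (V := R_NormedModule)).
    exists (dphi_dv t). apply phi_dv_derive, Ht. }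
  apply (continuous_minus rhs (fun x => INR m * phi_dv x / x)); [exact Hrhs|].
  apply (continuous_mult (fun x => INR m * phi_dv x) (fun x => / x)).
  - apply (continuous_mult (fun _ => INR m) phi_dv); [apply continuous_const | exact Hphi].
  - apply continuous_Rinv. lra.
Qed.

Lemma dphi_dv_pos_of_s_pos : s = 1 -> forall r, 0 < r < Rr -> 0 < dphi_dv r.
Proof.
  intro Hs. apply (interval_induction (fun u => 0 < dphi_dv u) 0 Rr).
  - intros r Hr Hpos. destruct (Req_dec r 0) as [->|Hr0].
    + destruct dphi_dv_pos_near_0 as [d [Hd Hnear]].
      exists d. split; [exact Hd|]. intros u Hu. apply Hnear. lra.
    + assert (Hr' : 0 < r < Rr) by lra.
      destruct (locally_Rabs _ _ (dphi_dv_continuous r Hr' _ (open_gt 0 _ (Hpos r ltac:(lra)))))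
        as [e [He Hnear]].
      exists e. split; [exact He|]. intros u Hu. apply Hnear. rewrite Rabs_right; lra.
  - intros r Hr Hleft.
    assert (Hdv_r := dv_pos r Hr).
    assert (Hrhs_le : forall u, 0 < u < r -> rhs u <= rhs r).
    { intros u Hu. unfold rhs. rewrite Hs, !Rmult_1_l.
      assert (Hdv_u := dv_pos u ltac:(lra)).
      rewrite !Rabs_right by lra.
      assert (dv u <= dv r).
      { apply dv_le_of_dphi_nonneg; [lra | lra | intros x Hx; left; apply Hleft; lra]. }
      assert (f (v u) <= f (v r)) by (apply f_v_le; lra).
      assert (g (dv u) <= g (dv r)) by (apply (strict_incr_halfline_le g _ _ g_incr); lra).
      lra. }
    assert (Hrhs_pos : 0 < rhs r).
    { unfold rhs. rewrite Hs, Rmult_1_l.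
      assert (0 < f (v r)) by (apply (strict_incr_halfline_pos f _ f_incr f_0), v_pos; lra).
      assert (0 < g (Rabs (dv r)))
        by (apply (strict_incr_halfline_pos g _ g_incr g_0); rewrite Rabs_right; lra).
      lra. }
    assert (Hbound := dphi_dv_ge r (rhs r) Hr Hrhs_le).
    assert (HN : 0 < INR (S m)) by (apply lt_0_INR; lia).
    replace (rhs r - INR m * (rhs r / INR (S m))) with (rhs r / INR (S m)) in Hbound
      by (rewrite S_INR in *; field; lra).
    assert (0 < rhs r / INR (S m)) by (apply Rdiv_lt_0_compat; lra).
    lra.
Qed.

(* When [s = -1], past the last point [a] before [b] where [dphi_dv >= 0], [dv] decreases and
   [v] increases, so each of the three terms of [dphi_dv] can only have grown from [a] to [b]. *)
Lemma dphi_dv_nonneg_of_s_neg : s = -1 -> forall b, 0 < b < Rr -> 0 <= dphi_dv b.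
Proof.
  intros Hs b Hb. apply Rnot_lt_le. intro Hneg_b.
  destruct dphi_dv_pos_near_0 as [d [Hd Hnear]].
  assert (Ht1 := Rmin_l d b). assert (Ht2 := Rmin_r d b).
  assert (Ht0 : 0 < Rmin d b) by (apply Rmin_pos; lra).
  set (t0 := Rmin d b / 2).
  destruct (last_nonneg_before dphi_dv t0 b) as [a [Ha [Hnonneg_a Hneg]]].
  - unfold t0. lra.
  - left. apply Hnear. unfold t0. lra.
  - exact Hneg_b.
  - intros x Hx. apply dphi_dv_continuous. unfold t0 in Hx. lra.
  - assert (Ha0 : 0 < a) by (unfold t0 in Ha; lra).
    destruct (mvt_closed phi_dv dphi_dv a b) as [c [Hc Hmvt]].
    + lra.
    + intros x Hx. apply phi_dv_derive. lra.
    + apply (is_derive_cont_within _ _ _ (dphi_dv a)), phi_dv_derive. lra.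
    + apply (is_derive_cont_within _ _ _ (dphi_dv b)), phi_dv_derive. lra.
    + assert (Hphi : phi_dv b <= phi_dv a) by (assert (Hc' := Hneg c ltac:(lra)); nra).
      assert (Hdv_a := dv_pos a ltac:(lra)). assert (Hdv_b := dv_pos b Hb).
      assert (Hdv : dv b <= dv a) by (apply (phi_p_le_reg p); assumption).
      assert (f (v a) <= f (v b)) by (apply f_v_le; lra).
      assert (g (dv b) <= g (dv a)) by (apply (strict_incr_halfline_le g _ _ g_incr); lra).
      assert (Hquot : phi_dv b / b <= phi_dv a / a).
      { assert (0 < phi_dv b) by (apply phi_p_gt0, Hdv_b).
        apply Rle_trans with (phi_dv a / b).
        - apply Rmult_le_compat_r; [left; apply Rinv_0_lt_compat|]; lra.
        - apply Rmult_le_compat_l; [lra | apply Rinv_le_contravar; lra]. }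
      assert (INR m * (phi_dv b / b) <= INR m * (phi_dv a / a))
        by (apply Rmult_le_compat_l; [apply pos_INR | exact Hquot]).
      unfold dphi_dv, rhs in Hnonneg_a, Hneg_b. rewrite Hs, !Rabs_right in * by lra.
      unfold Rdiv in *. rewrite !Rmult_assoc in *. lra.
Qed.

Lemma dphi_dv_nonneg (r : R) : 0 < r < Rr -> 0 <= dphi_dv r.
Proof.
  destruct s_sign as [Hs|Hs].
  - intro Hr. left. exact (dphi_dv_pos_of_s_pos Hs r Hr).
  - exact (dphi_dv_nonneg_of_s_neg Hs r).
Qed.

(* Where [dv > 0], [dv] is the [1/(p-1)]-th power of [phi_dv]. *)
Lemma dv_derive (r : R) : 0 < r < Rr ->
  is_derive dv r (dphi_dv r * (/ (p - 1) * Rpower (phi_dv r) (/ (p - 1) - 1))).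
Proof.
  intro Hr.
  apply (is_derive_ext_loc (fun x => Rpower (phi_dv x) (/ (p - 1)))).
  - apply (locally_interval _ r 0 Rr); [simpl; lra | simpl; lra |].
    intros x Hx0 HxR. simpl in Hx0, HxR.
    apply Rpower_phi_p; [exact p_gt1 | apply dv_pos; lra].
  - apply (is_derive_comp (fun z => Rpower z (/ (p - 1))) phi_dv).
    + apply is_derive_Reals, derivable_pt_lim_power, phi_p_gt0, dv_pos, Hr.
    + apply phi_dv_derive, Hr.
Qed.

Lemma v_le (r : R) : 0 < r < Rr -> v r <= v0 + Rr * dv r.
Proof.
  intro Hr.
  destruct (mvt_closed v dv 0 r) as [c [Hc Hmvt]].
  - lra.
  - intros x Hx. apply v_derive. lra.
  - apply (cont_within_subset D); [intros u Hu; unfold D; lra | apply v_cont; lra].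
  - apply (cont_within_subset D); [intros u Hu; unfold D; lra | apply v_cont; lra].
  - rewrite v_0, Rminus_0_r in Hmvt.
    assert (dv c <= dv r)
      by (apply dv_le_of_dphi_nonneg; [lra | lra | intros u Hu; apply dphi_dv_nonneg; lra]).
    assert (0 < dv c) by (apply dv_pos; lra).
    assert (0 < dv r) by (apply dv_pos, Hr).
    nra.
Qed.

Lemma radial_solution_shape (r : R) : 0 < r < Rr ->
  0 < v r /\ 0 < dv r /\ (exists d2, is_derive dv r d2 /\ 0 <= d2) /\ v r <= v0 + Rr * dv r.
Proof.
  intro Hr. split; [apply v_pos; lra|]. split; [apply dv_pos, Hr|]. split; [|apply v_le, Hr].
  eexists. split; [apply dv_derive, Hr|].
  apply Rmult_le_pos; [apply dphi_dv_nonneg, Hr|].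
  apply Rmult_le_pos; [left; apply Rinv_0_lt_compat; lra | left; apply exp_pos].
Qed.

End RadialSolution.

Theorem lemma2p2 (p : R) (n : nat) (f g : R -> R) (s Rr v0 : R) (v dv : R -> R) :
  1 < p -> (1 <= n)%nat ->
  continuous_on_halfline f -> strict_incr_halfline f -> f 0 = 0 ->
  loc_lipschitz_halfline g -> strict_incr_halfline g -> g 0 = 0 ->
  (s = 1 \/ s = -1) ->
  0 < Rr -> 0 < v0 ->
  is_radial_solution p n f g s Rr v0 v dv ->
  forall r, 0 < r < Rr ->
    0 < v r /\ 0 < dv r /\
    (exists d2, is_derive dv r d2 /\ 0 <= d2) /\
    v r <= v0 + Rr * dv r.
Proof.
  intros Hp Hn Hf_cont Hf_incr Hf0 Hg_lip Hg_incr Hg0 Hs HRr Hv0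
    [Hv_cont [Hdv_cont [Hv_derive [Hflux_derive [Hv_0 Hdv_0]]]]].
  destruct n as [|m]; [lia|].
  replace (S m - 1)%nat with m in Hflux_derive by lia.
  exact (radial_solution_shape p m f g s Rr v0 v dv Hp Hf_cont Hf_incr Hf0 Hg_lip Hg_incr Hg0
           Hs HRr Hv0 Hv_cont Hdv_cont Hv_derive Hflux_derive Hv_0 Hdv_0).
Qed.
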